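(* There is an absolute constant $C>0$ such that the following holds. Let $k\ge1$, $\mathcal{R}>0$, and let $(\lambda_i,u_i),(\lambda_i',u_i')\in\mathbb{R}\times\mathbb{S}^{d-1}$ for $i\in[k]$ with $\sum_i|\lambda_i|\le\mathcal{R}$ and $\sum_i|\lambda_i'|\le\mathcal{R}$. Let $f_{\vec\lambda,\vec u}(x)=\sum_{i=1}^k\lambda_i\mathrm{ReLU}(\langle u_i,x\rangle)$ and similarly $f_{\vec\lambda',\vec u'}$. Then $$\|f_{\vec\lambda,\vec u}-f_{\vec\lambda',\vec u'}\|_2\le C\,k\max(1,\mathcal{R})\cdot d_{\mathsf{param}}\big((\vec\lambda,\vec u),(\vec\lambda',\vec u')\big).$$
   Context: $\mathrm{ReLU}(a)=\max(0,a)$. For $f:\mathbb{R}^d\to\mathbb{R}$, $\|f\|_2^2=\mathbb{E}_{x\sim\mathcal{N}(0,I_d)}[f(x)^2]$. The parameter distance is $d_{\mathsf{param}}((\vec\lambda,\vec u),(\vec\lambda',\vec u'))=\min_\pi\max_{i\in[k]}\{|\lambda_i-\lambda'_{\pi(i)}|+\|u_i-u'_{\pi(i)}\|\}$, the minimum over permutations $\pi$ of $[k]$, with $\|\cdot\|$ the Euclidean norm. *)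

From HB Require Import structures.
From mathcomp Require Import all_boot all_order all_algebra all_fingroup.
From mathcomp Require Import all_classical all_reals all_analysis.
Set Implicit Arguments. Unset Strict Implicit. Unset Printing Implicit Defensive.
Import Order.TTheory GRing.Theory Num.Theory.
Local Open Scope ring_scope.

Section Defs.
Context {R : realType}.

Definition relu (a : R) : R := Num.max 0 a.

Definition dotv (d : nat) (u x : 'rV[R]_d) : R := \sum_(j < d) u ord0 j * x ord0 j.
Definition enorm (d : nat) (u : 'rV[R]_d) : R := Num.sqrt (dotv u u).

(* Iterated Gaussian integral: coordinate n (0-based) of the argument is
   integrated against the standard normal N(0,1) on R, for n < d.
   For nonnegative integrands this is (by Tonelli) the expectation
   under N(0, I_d). *)
Fixpoint gauss_iter (n : nat) (g : (nat -> R) -> \bar R) : \bar R :=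
  match n with
  | 0 => g (fun _ => 0)
  | n'.+1 => (\int[normal_prob 0 1]_t
                gauss_iter n' (fun x => g (fun i => if i == n' then t else x i)))%E
  end.

Definition gauss_sq_exp (d : nat) (f : 'rV[R]_d -> R) : \bar R :=
  gauss_iter d (fun x => ((f (\row_(j < d) x j)) ^+ 2)%:E).

Definition L2norm (d : nat) (f : 'rV[R]_d -> R) : \bar R :=
  match gauss_sq_exp f with
  | EFin r => (Num.sqrt r)%:E
  | _ => +oo%E
  end.

Definition relu_net (k d : nat) (lam : 'I_k -> R) (u : 'I_k -> 'rV[R]_d)
  (x : 'rV[R]_d) : R :=
  \sum_(i < k) lam i * relu (dotv (u i) x).

Definition dperm (k d : nat) (lam lam' : 'I_k -> R) (u u' : 'I_k -> 'rV[R]_d)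
  (s : 'S_k) : R :=
  \big[Num.max/0]_(i < k) (`|lam i - lam' (s i)| + enorm (u i - u' (s i))).

(* d_param = min over permutations (seeded with the identity permutation,
   which is itself in the range, so this is exactly the minimum) *)
Definition dparam (k d : nat) (lam lam' : 'I_k -> R) (u u' : 'I_k -> 'rV[R]_d) : R :=
  \big[Num.min/dperm lam lam' u u' 1%g]_(s : 'S_k) dperm lam lam' u u' s.

End Defs.

From HB Require Import structures.
From mathcomp Require Import all_boot all_order all_algebra all_fingroup.
From mathcomp Require Import all_classical all_reals all_analysis.
From mathcomp Require Import measurable_realfun.
From mathcomp Require Import ring lra.
Import Order.TTheory GRing.Theory Num.Theory.
Import numFieldTopology.Exports numFieldNormedType.Exports.
Local Open Scope ring_scope.
Local Open Scope classical_set_scope.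

(* Fix a permutation s attaining d_param and pair neuron i of the first network
   with neuron s i of the second. Since
     l relu a - l' relu b = (l - l') relu a + l' (relu a - relu b)
   and relu is 1-Lipschitz, |f(x) - f'(x)| is at most a sum of 2k terms
   |<v_p, x>|, with v = |l_i - l'_(s i)| u_i and |l'_(s i)| (u_i - u'_(s i)),
   so (f - f')(x)^2 <= 2k sum_p <v_p, x>^2 by Cauchy-Schwarz.  For a standard
   Gaussian x, E <v, x>^2 <= K |v|^2, where K bounds E t^2 for t ~ N(0, 1);
   this is proved one coordinate at a time, using that a nonnegative quadratic
   A + B t + C t^2 has Gaussian integral at most A + C K because the odd term
   cancels under t |-> -t.  Finally sum_p |v_p|^2 <= 2k max(1, R)^2 d_param^2,
   whence ||f - f'||_2 <= 2 sqrt K k max(1, R) d_param. *)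

Section finite_sums.
Context {R : realFieldType}.

Lemma sqr_sum_le_card {I : finType} (z : I -> R) :
  (\sum_i z i) ^+ 2 <= #|I|%:R * \sum_i z i ^+ 2.
Proof.
have sqr_sum : (\sum_i z i) ^+ 2 = \sum_i \sum_j z i * z j.
  by rewrite expr2 mulr_suml; apply: eq_bigr => i _; rewrite mulr_sumr.
have card_sum : #|I|%:R * \sum_i z i ^+ 2 = \sum_i \sum_(j : I) z i ^+ 2.
  by rewrite mulr_sumr; apply: eq_bigr => i _; rewrite sumr_const mulr_natl.
have : 0 <= \sum_i \sum_j (z i - z j) ^+ 2.
  by apply: sumr_ge0 => i _; apply: sumr_ge0 => j _; exact: sqr_ge0.
have -> : \sum_i \sum_j (z i - z j) ^+ 2 =
    \sum_i \sum_(j : I) z i ^+ 2 + \sum_(i : I) \sum_j z j ^+ 2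
    - 2 * \sum_i \sum_j z i * z j.
  rewrite mulr_sumr -big_split -sumrB /=; apply: eq_bigr => i _.
  by rewrite mulr_sumr -big_split -sumrB /=; apply: eq_bigr => j _; ring.
by rewrite [X in _ + X - _]exchange_big /= -card_sum -sqr_sum; lra.
Qed.

Lemma sum_prod_bool {V : nmodType} (I : finType) (F : I * bool -> V) :
  \sum_p F p = \sum_i (F (i, true) + F (i, false)).
Proof.
transitivity (\sum_i \sum_(b : bool) F (i, b)).
  by rewrite pair_bigA; apply: eq_bigr => -[].
by apply: eq_bigr => i _; rewrite big_bool.
Qed.

End finite_sums.

Section dot_product.
Context {R : realType}.

Lemma dotvBl {d} (u v x : 'rV[R]_d) : dotv (u - v) x = dotv u x - dotv v x.
Proof. by rewrite /dotv -sumrB; apply: eq_bigr => j _; rewrite !mxE mulrBl. Qed.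

Lemma dotvZl {d} (c : R) (u x : 'rV[R]_d) : dotv (c *: u) x = c * dotv u x.
Proof. by rewrite /dotv mulr_sumr; apply: eq_bigr => j _; rewrite !mxE mulrA. Qed.

Lemma sqr_enorm {d} (u : 'rV[R]_d) : enorm u ^+ 2 = dotv u u.
Proof. by rewrite /enorm sqr_sqrtr // sumr_ge0 // => j _; rewrite -expr2 sqr_ge0. Qed.

Lemma sqr_enormZ {d} (c : R) (u : 'rV[R]_d) : enorm (c *: u) ^+ 2 = c ^+ 2 * enorm u ^+ 2.
Proof.
rewrite !sqr_enorm dotvZl /dotv mulr_sumr mulr_sumr; apply: eq_bigr => j _.
by rewrite mxE; ring.
Qed.

End dot_product.

Section nonmeasurable_integral.
Context d (T : measurableType d) (R : realType) (mu : {measure set T -> \bar R}).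

(* No measurability is needed: the integral of a nonnegative function is the
   supremum of the integrals of its simple minorants. *)
Lemma nonmeasurable_ge0_le_integral (f g : T -> \bar R) :
  (forall x, 0 <= f x)%E -> (forall x, f x <= g x)%E ->
  (\int[mu]_x f x <= \int[mu]_x g x)%E.
Proof.
move=> f0 fg; have g0 x : (0 <= g x)%E := le_trans (f0 x) (fg x).
rewrite ge0_integralE //; rewrite [leRHS]ge0_integralE //.
apply: ereal_sup_le => _ [h hf <-]; exists h => //= x.
by apply: le_trans (hf x) _; rewrite /patch; case: ifP.
Qed.

End nonmeasurable_integral.

Section standard_normal.
Context {R : realType}.
Local Notation leb := (@lebesgue_measure R).
Local Notation N01 := (normal_prob (0 : R) 1).

Lemma ge0_integral_lebesgueN {f : R -> \bar R} : measurable_fun [set: R] f ->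
  (forall x, 0 <= f x)%E -> (\int[leb]_x f (- x)%R = \int[leb]_x f x)%E.
Proof.
move=> mf f0.
transitivity (\int[pushforward leb (-%R : R -> measurableTypeR R)]_x f x)%E.
  by rewrite ge0_integral_pushforward.
by apply: eq_measure_integral => A mA _; exact: lebesgue_measureN.
Qed.

Lemma ge0_integral_normal_prob {f : R -> \bar R} : measurable_fun [set: R] f ->
  (forall x, 0 <= f x)%E ->
  (\int[N01]_x f x = \int[leb]_x (f x * (normal_pdf 0 1 x)%:E))%E.
Proof.
move=> mf f0; have dom := normal_prob_dominates (0 : R) 1.
have mpdf : measurable_fun [set: R] (fun x => (normal_pdf 0 1 x)%:E).
  by apply/measurable_EFinP; exact: measurable_normal_pdf.
rewrite -(Radon_Nikodym_SigmaFinite.change_of_variables dom) //.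
apply: ae_eq_integral => //; first apply: emeasurable_funM => //.
- exact: measurable_int (Radon_Nikodym_SigmaFinite.f_integrable dom).
- exact: emeasurable_funM.
apply: ae_eqe_mul2l; apply: integral_ae_eq => //.
- exact: Radon_Nikodym_SigmaFinite.f_integrable.
- by move=> E _ mE; rewrite -Radon_Nikodym_SigmaFinite.f_integral.
Qed.

Lemma normal_pdfN (x : R) : normal_pdf 0 1 (- x) = normal_pdf 0 1 x.
Proof. by rewrite /normal_pdf oner_eq0 /normal_fun !subr0 sqrrN. Qed.

Lemma ge0_integral_normal_probN {f : R -> \bar R} : measurable_fun [set: R] f ->
  (forall x, 0 <= f x)%E -> (\int[N01]_x f (- x)%R = \int[N01]_x f x)%E.
Proof.
move=> mf f0; have mfN : measurable_fun [set: R] (fun x => f (- x)%R).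
  exact: measurableT_comp.
have mpdf : measurable_fun [set: R] (fun x => (normal_pdf 0 1 x)%:E).
  by apply/measurable_EFinP; exact: measurable_normal_pdf.
have fpdf0 x : (0 <= f x * (normal_pdf 0 1 x)%:E)%E.
  by rewrite mule_ge0 // lee_fin normal_pdf_ge0.
rewrite !ge0_integral_normal_prob //.
rewrite -(ge0_integral_lebesgueN (emeasurable_funM mf mpdf) fpdf0).
by apply: eq_integral => x _; rewrite normal_pdfN.
Qed.

(* An upper bound (in fact 16) for the second moment of N(0, 1) that avoids
   computing it, from t^2 exp (- 3 t^2 / 8) <= 8. *)
Definition normal_moment2_ub : R := 8 * normal_peak 1 / normal_peak 2.

Lemma normal_moment2_ub_gt0 : 0 < normal_moment2_ub.
Proof.
apply: divr_gt0; first apply: mulr_gt0.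
all: by rewrite ?ltr0n // normal_peak_gt0 ?oner_eq0 ?pnatr_eq0.
Qed.

Lemma sqr_mul_normal_pdf_le (t : R) :
  t ^+ 2 * normal_pdf 0 1 t <= normal_moment2_ub * normal_pdf 0 2 t.
Proof.
rewrite /normal_pdf oner_eq0 pnatr_eq0 /normal_fun !subr0.
set a := t ^+ 2 / 8.
have -> : - t ^+ 2 / (1 ^+ 2 *+ 2) = - a + - (3 * a) by rewrite /a expr1n; field.
have -> : - t ^+ 2 / (2 ^+ 2 *+ 2) = - a by rewrite /a; field.
have peak2 : 0 < normal_peak (2 : R) by rewrite normal_peak_gt0 ?pnatr_eq0.
have t2_le : t ^+ 2 * expR (- (3 * a)) <= 8.
  have a0 : 0 <= a by rewrite divr_ge0 ?sqr_ge0.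
  have : 3 * a <= expR (3 * a) by apply: le_trans (expR_ge1Dx _); lra.
  have -> : t ^+ 2 = 8 * a by rewrite /a; field.
  by rewrite expRN ler_pdivrMr ?expR_gt0 //; lra.
rewrite expRD /normal_moment2_ub.
have -> : 8 * normal_peak 1 / normal_peak 2 * (normal_peak 2 * expR (- a)) =
    8 * (normal_peak 1 * expR (- a)) by field; rewrite gt_eqF.
have -> : t ^+ 2 * (normal_peak 1 * (expR (- a) * expR (- (3 * a)))) =
    t ^+ 2 * expR (- (3 * a)) * (normal_peak 1 * expR (- a)) by ring.
apply: ler_wpM2r t2_le.
by rewrite mulr_ge0 ?normal_peak_ge0 ?expR_ge0.
Qed.

Lemma integral_normal_prob_sqr_le :
  (\int[N01]_t (t ^+ 2)%:E <= normal_moment2_ub%:E)%E.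
Proof.
have mpdf2 : measurable_fun [set: R] (fun x => (normal_pdf 0 2 x)%:E).
  by apply/measurable_EFinP; exact: measurable_normal_pdf.
have msqr : measurable_fun [set: R] (fun t : R => (t ^+ 2)%:E).
  exact/measurable_EFinP.
rewrite ge0_integral_normal_prob //; last by move=> x; rewrite lee_fin sqr_ge0.
apply: (@le_trans _ _ (\int[leb]_x (normal_moment2_ub%:E * (normal_pdf 0 2 x)%:E))%E).
  apply: ge0_le_integral => //.
  - by move=> x _; rewrite -EFinM lee_fin mulr_ge0 ?sqr_ge0 ?normal_pdf_ge0.
  - apply: emeasurable_funM => //.
    by apply/measurable_EFinP; exact: measurable_normal_pdf.
  - by apply: emeasurable_funM.
  - by move=> x _; rewrite -!EFinM lee_fin sqr_mul_normal_pdf_le.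
rewrite ge0_integralZl_EFin ?integral_normal_pdf ?mule1 //.
- by move=> x _; rewrite lee_fin normal_pdf_ge0.
- exact: ltW normal_moment2_ub_gt0.
Qed.

Lemma integral_normal_prob_even_quadratic_le (a b : R) : 0 <= a -> 0 <= b ->
  (\int[N01]_t (a + b * t ^+ 2)%:E <= (a + b * normal_moment2_ub)%:E)%E.
Proof.
move=> a0 b0; have msqr : measurable_fun [set: R] (fun t : R => (t ^+ 2)%:E).
  exact/measurable_EFinP.
have sqr0 (t : R) : (0 <= (t ^+ 2)%:E)%E by rewrite lee_fin sqr_ge0.
have mbsqr : measurable_fun [set: R] (fun t : R => b%:E * (t ^+ 2)%:E)%E.
  exact: emeasurable_funM.
have bsqr0 t : [set: R] t -> (0 <= b%:E * (t ^+ 2)%:E)%E.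
  by rewrite -EFinM lee_fin mulr_ge0 ?sqr_ge0.
under eq_integral do rewrite EFinD EFinM.
rewrite ge0_integralD //.
have N01T : N01 [set: R] = 1%E by rewrite /normal_prob integral_normal_pdf.
rewrite integral_cst //= N01T mule1 ge0_integralZl_EFin //.
by rewrite EFinD EFinM leeD2l // lee_wpmul2l ?lee_fin // integral_normal_prob_sqr_le.
Qed.

Lemma integral_normal_prob_quadratic_le (A B C : R) : 0 <= C ->
    (forall t, 0 <= A + B * t + C * t ^+ 2) ->
  (\int[N01]_t (A + B * t + C * t ^+ 2)%:E <= (A + C * normal_moment2_ub)%:E)%E.
Proof.
move=> C0 q0; set q := fun t : R => A + B * t + C * t ^+ 2.
have A0 : 0 <= A by have := q0 0; rewrite mulr0 expr0n /= mulr0 !addr0.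
have mq : measurable_fun [set: R] (fun t => (q t)%:E).
  apply/measurable_EFinP.
  by repeat first [exact: measurable_cst | exact: measurable_id | exact: exprn_measurable
    | apply: measurable_funM | apply: measurable_funD].
have q0E t : (0 <= (q t)%:E)%E by rewrite lee_fin; exact: q0.
have mqN : measurable_fun [set: R] (fun t => (q (- t))%:E).
  by apply: (measurableT_comp mq); exact: oppr_measurable.
(* Reflecting t into - t cancels the odd term. *)
have twice : (\int[N01]_t (q t)%:E + \int[N01]_t (q t)%:E <=
    (2 * A + 2 * C * normal_moment2_ub)%:E)%E.
  rewrite -{1}(ge0_integral_normal_probN mq q0E) -ge0_integralD //.
  have -> : (\int[N01]_t ((q (- t)%R)%:E + (q t)%:E) =
      \int[N01]_t (2 * A + 2 * C * t ^+ 2)%:E)%E.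
    by apply: eq_integral => t _; rewrite -EFinD /q; congr EFin; ring.
  by apply: integral_normal_prob_even_quadratic_le; rewrite mulr_ge0.
have : (0 <= \int[N01]_t (q t)%:E)%E by exact: integral_ge0.
move: twice; case: (\int[_]_t _)%E => [r| |] //=.
by rewrite -EFinD !lee_fin; lra.
Qed.
End standard_normal.

Section iterated_gaussian_integral.
Context {R : realType}.
Local Notation N01 := (normal_prob (0 : R) 1).
Local Notation K := (@normal_moment2_ub R).

Lemma gauss_iter_ge0 n (g : (nat -> R) -> \bar R) :
  (forall x, 0 <= g x)%E -> (0 <= gauss_iter n g)%E.
Proof.
elim: n g => [|n IHn] g g0 /=; first exact: g0.
by apply: integral_ge0 => t _; apply: IHn => x; exact: g0.
Qed.

Lemma le_gauss_iter n (g1 g2 : (nat -> R) -> \bar R) : (forall x, 0 <= g1 x)%E ->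
  (forall x, g1 x <= g2 x)%E -> (gauss_iter n g1 <= gauss_iter n g2)%E.
Proof.
elim: n g1 g2 => [|n IHn] g1 g2 g10 g12 /=; first exact: g12.
apply: nonmeasurable_ge0_le_integral => t.
- by apply: gauss_iter_ge0 => x; exact: g10.
- by apply: IHn => x; [exact: g10 | exact: g12].
Qed.

Lemma sum_sqr_affineE (I : finType) (c v e : I -> R) (t : R) :
  \sum_l ((c l + v l * t) ^+ 2 + e l) =
  \sum_l (c l ^+ 2 + e l) + (\sum_l 2 * c l * v l) * t + (\sum_l v l ^+ 2) * t ^+ 2.
Proof. by rewrite !mulr_suml -!big_split /=; apply: eq_bigr => l _; ring. Qed.

(* The affine offsets [c] make the induction go through: integrating out the
   last coordinate [t] turns [c l] into [c l + w l n * t]. *)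
Lemma gauss_iter_sum_sqr_affine_le n (I : finType) (c : I -> R) (w : I -> nat -> R) :
  (gauss_iter n (fun x => (\sum_l (c l + \sum_(j < n) w l j * x j) ^+ 2)%:E)
   <= (\sum_l (c l ^+ 2 + K * \sum_(j < n) w l j ^+ 2))%:E)%E.
Proof.
elim: n c => [|n IHn] c /=.
  by rewrite lee_fin; apply: ler_sum => l _; rewrite !big_ord0 addr0 mulr0 addr0.
set e := fun l => K * \sum_(j < n) w l j ^+ 2.
have e0 l : 0 <= e l.
  by rewrite mulr_ge0 ?(ltW normal_moment2_ub_gt0) ?sumr_ge0 // => j _; rewrite sqr_ge0.
apply: (@le_trans _ _ (\int[N01]_t (\sum_l ((c l + w l n * t) ^+ 2 + e l))%:E))%E.
  apply: nonmeasurable_ge0_le_integral => t.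
    by apply: gauss_iter_ge0 => x; rewrite lee_fin sumr_ge0 // => l _; rewrite sqr_ge0.
  set F := (fun x : nat -> R => _).
  have -> : F =
      (fun x => (\sum_l ((c l + w l n * t) + \sum_(j < n) w l j * x j) ^+ 2)%:E).
    apply: funext => x; rewrite /F; congr EFin; apply: eq_bigr => l _.
    rewrite big_ord_recr /= eqxx (eq_bigr (fun j : 'I_n => w l j * x j)); last first.
      by move=> j _ /=; rewrite ltn_eqF.
    congr (_ ^+ 2); ring.
  exact: IHn.
under eq_integral do rewrite sum_sqr_affineE.
apply: le_trans.
  apply: integral_normal_prob_quadratic_le.
  - by rewrite sumr_ge0 // => l _; rewrite sqr_ge0.
  - by move=> t; rewrite -sum_sqr_affineE sumr_ge0 // => l _; rewrite addr_ge0 ?sqr_ge0.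
rewrite lee_fin le_eqVlt; apply/orP; left; apply/eqP.
rewrite mulr_suml -big_split /=; apply: eq_bigr => l _.
by rewrite big_ord_recr /= /e; ring.
Qed.

End iterated_gaussian_integral.

Section gaussian_L2norm.
Context {R : realType}.
Local Notation K := (@normal_moment2_ub R).

Lemma gauss_sq_exp_ge0 {d} (f : 'rV[R]_d -> R) : (0 <= gauss_sq_exp f)%E.
Proof. by apply: gauss_iter_ge0 => x; rewrite lee_fin sqr_ge0. Qed.

Lemma gauss_sq_exp_le_sum_sqr_dotv {d} {I : finType} {M : R} {v : I -> 'rV[R]_d}
    {f : 'rV[R]_d -> R} : 0 <= M ->
    (forall x, f x ^+ 2 <= M * \sum_p dotv (v p) x ^+ 2) ->
  (gauss_sq_exp f <= (M * K * \sum_p enorm (v p) ^+ 2)%:E)%E.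
Proof.
move=> M0 fle; pose w p (j : nat) := Num.sqrt M * oapp (v p ord0) 0 (insub j).
have wE p (j : 'I_d) : w p j = Num.sqrt M * v p ord0 j by rewrite /w valK.
have sum_wx p (x : nat -> R) :
    \sum_(j < d) w p j * x j = Num.sqrt M * dotv (v p) (\row_j x j).
  by rewrite /dotv mulr_sumr; apply: eq_bigr => j _; rewrite wE mxE mulrA.
have sum_w2 p : \sum_(j < d) w p j ^+ 2 = M * enorm (v p) ^+ 2.
  rewrite sqr_enorm /dotv mulr_sumr; apply: eq_bigr => j _.
  by rewrite wE exprMn sqr_sqrtr // expr2.
apply: le_trans (le_trans _ (gauss_iter_sum_sqr_affine_le d _ (fun=> 0) w)) _.
  apply: le_gauss_iter => x; rewrite lee_fin ?sqr_ge0 //; apply: le_trans (fle _) _.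
  by rewrite mulr_sumr; apply: ler_sum => p _; rewrite add0r sum_wx exprMn sqr_sqrtr.
rewrite lee_fin -mulrA mulr_sumr mulr_sumr; apply: ler_sum => p _.
by rewrite expr0n add0r sum_w2 mulrCA.
Qed.

Lemma L2norm_le {d} (f : 'rV[R]_d -> R) (T : R) : 0 <= T ->
  (gauss_sq_exp f <= (T ^+ 2)%:E)%E -> (L2norm f <= T%:E)%E.
Proof.
rewrite /L2norm => T0; have := gauss_sq_exp_ge0 f.
case: (gauss_sq_exp f) => [r| |] //=; rewrite !lee_fin => r0 rT.
by rewrite -(ger0_norm T0) -sqrtr_sqr ler_sqrt // sqr_ge0.
Qed.

End gaussian_L2norm.

Section relu_network.
Context {R : realType}.
Local Notation K := (@normal_moment2_ub R).

Lemma normr_relu_le (a : R) : `|relu a| <= `|a|.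
Proof. by rewrite /relu /Order.max; case: ltP; rewrite ?normr0. Qed.

Lemma relu_lipschitz (a b : R) : `|relu a - relu b| <= `|a - b|.
Proof.
have le_norm := ler_norm (a - b).
have le_normN : - (a - b) <= `|a - b| by rewrite -normrN ler_norm.
rewrite ler_norml /relu /Order.max.
by case: (ltP 0 a) => ha; case: (ltP 0 b) => hb; apply/andP; split; lra.
Qed.

Lemma mul_relu_diff_le (l m a b : R) :
  `|l * relu a - m * relu b| <= `|l - m| * `|a| + `|m| * `|a - b|.
Proof.
have -> : l * relu a - m * relu b = (l - m) * relu a + m * (relu a - relu b) by ring.
apply: le_trans (ler_normD _ _) _; rewrite !normrM.
by apply: lerD; apply: ler_wpM2l => //; [exact: normr_relu_le | exact: relu_lipschitz].
Qed.

Section fixed_pairing.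
Context {k d : nat} (lam lam' : 'I_k -> R) (u u' : 'I_k -> 'rV[R]_d) (s : 'S_k).

Local Notation D := (dperm lam lam' u u' s).

Let pair_vec (p : 'I_k * bool) : 'rV[R]_d :=
  if p.2 then `|lam p.1 - lam' (s p.1)| *: u p.1
  else `|lam' (s p.1)| *: (u p.1 - u' (s p.1)).

Lemma relu_net_diff_sqr_le x : (relu_net lam u x - relu_net lam' u' x) ^+ 2 <=
  k%:R * 2 * \sum_p dotv (pair_vec p) x ^+ 2.
Proof.
have reindex : relu_net lam' u' x = \sum_i lam' (s i) * relu (dotv (u' (s i)) x).
  exact: (reindex_inj (@perm_inj _ s)).
have diff_le : `|relu_net lam u x - relu_net lam' u' x| <= \sum_p `|dotv (pair_vec p) x|.
  rewrite reindex /relu_net -sumrB sum_prod_bool; apply: le_trans (ler_norm_sum _ _ _) _.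
  apply: ler_sum => i _; rewrite /= !dotvZl !normrM !normr_id dotvBl.
  exact: mul_relu_diff_le.
have diff_ge0 := normr_ge0 (relu_net lam u x - relu_net lam' u' x).
rewrite -real_normK ?num_real //.
apply: le_trans (_ : _ <= (\sum_p `|dotv (pair_vec p) x|) ^+ 2) _.
  by rewrite !expr2 ler_pM.
apply: le_trans (sqr_sum_le_card _) _.
rewrite card_prod card_ord card_bool natrM.
apply: ler_wpM2l; first by rewrite mulr_ge0.
by apply: ler_sum => p _; rewrite real_normK ?num_real.
Qed.

Lemma dperm_ge0 : 0 <= D.
Proof. exact: bigmax_ge_id. Qed.

Lemma le_dperm i : `|lam i - lam' (s i)| + enorm (u i - u' (s i)) <= D.
Proof. exact: le_bigmax. Qed.

Lemma sum_sqr_enorm_pair_vec_le (B : R) : 1 <= B ->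
    (forall i, enorm (u i) <= 1) -> (forall j, `|lam' j| <= B) ->
  \sum_p enorm (pair_vec p) ^+ 2 <= k%:R * (2 * B ^+ 2 * D ^+ 2).
Proof.
move=> B1 u1 lamB; have B2 : 1 <= B ^+ 2 by rewrite expr2; nra.
rewrite mulr_natl -[k in _ *+ k]card_ord -sumr_const sum_prod_bool.
apply: ler_sum => i _; rewrite /= !sqr_enormZ.
have u2 : enorm (u i) ^+ 2 <= 1 by rewrite -(expr1n R 2) ler_pM ?sqrtr_ge0.
have := le_dperm i; set a := `|_ - _|; set e := enorm (_ - _); set b := `|_| => aeD.
have a0 : 0 <= a by exact: normr_ge0.
have e0 : 0 <= e by exact: sqrtr_ge0.
have b0 : 0 <= b by exact: normr_ge0.
have bB : b <= B by exact: lamB.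
have aD : a <= D by lra.
have eD : e <= D by lra.
have a2 : a ^+ 2 <= D ^+ 2 by rewrite !expr2 ler_pM.
have be0 : 0 <= b * e by exact: mulr_ge0.
have beBD : b * e <= B * D by apply: ler_pM.
have be2 : (b * e) ^+ 2 <= (B * D) ^+ 2 by rewrite !expr2 ler_pM.
rewrite !exprMn in be2; have := sqr_ge0 D; have := sqr_ge0 a; nra.
Qed.

Lemma L2norm_relu_net_diff_le_dperm (B : R) : 1 <= B ->
    (forall i, enorm (u i) <= 1) -> (forall j, `|lam' j| <= B) ->
  (L2norm (fun x => (relu_net lam u x - relu_net lam' u' x)%R)
    <= (2 * Num.sqrt K * k%:R * B * D)%:E)%E.
Proof.
move=> B1 u1 lamB; have K0 : 0 <= K := ltW normal_moment2_ub_gt0.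
apply: L2norm_le; first by rewrite !mulr_ge0 ?sqrtr_ge0 ?dperm_ge0 //; lra.
have k2_ge0 : 0 <= k%:R * 2 :> R by rewrite mulr_ge0.
apply: le_trans (gauss_sq_exp_le_sum_sqr_dotv k2_ge0 relu_net_diff_sqr_le) _.
have -> : (2 * Num.sqrt K * k%:R * B * D) ^+ 2 =
    k%:R * 2 * K * (k%:R * (2 * B ^+ 2 * D ^+ 2)).
  by rewrite !exprMn sqr_sqrtr //; ring.
rewrite lee_fin; apply: ler_wpM2l; first by rewrite mulr_ge0.
exact: sum_sqr_enorm_pair_vec_le.
Qed.

End fixed_pairing.

Lemma dparam_attained {k d} (lam lam' : 'I_k -> R) (u u' : 'I_k -> 'rV[R]_d) :
  exists s, dparam lam lam' u u' = dperm lam lam' u u' s.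
Proof.
apply: (big_ind (fun m => exists s, m = dperm lam lam' u u' s)); first by exists 1%g.
  by move=> a b [s ->] [t ->]; rewrite /Order.min; case: ifP; [exists s | exists t].
by move=> s _; exists s.
Qed.

End relu_network.

Theorem lemmaA2 (R : realType) :
  exists C : R, 0 < C /\
  forall (k d : nat) (Rb : R) (lam lam' : 'I_k -> R) (u u' : 'I_k -> 'rV[R]_d),
    (1 <= k)%N -> 0 < Rb ->
    (forall i, enorm (u i) = 1) -> (forall i, enorm (u' i) = 1) ->
    \sum_(i < k) `|lam i| <= Rb -> \sum_(i < k) `|lam' i| <= Rb ->
    (L2norm (fun x => (relu_net lam u x - relu_net lam' u' x)%R)
      <= (C * k%:R * Num.max 1 Rb * dparam lam lam' u u')%:E)%E.
Proof.
exists (2 * Num.sqrt normal_moment2_ub); split.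
  by rewrite mulr_gt0 // sqrtr_gt0 normal_moment2_ub_gt0.
(* Only enorm (u i) <= 1 and the l1 bound on lam' are needed. *)
move=> k d Rb lam lam' u u' _ _ u1 _ _ sum_lam'.
have [s ->] := dparam_attained lam lam' u u'.
apply: L2norm_relu_net_diff_le_dperm; first by rewrite le_max lexx.
  by move=> i; rewrite u1.
move=> j; apply: le_trans (le_trans sum_lam' _); last by rewrite le_max lexx orbT.
by rewrite (bigD1 j) //= lerDl sumr_ge0.
Qed.
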